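(* Let $\delta\in(0,1)$, let $S\subseteq V$ be fixed, and let $\mathcal{R}$ be a collection of $T$ independent IBSs drawn from $\Omega^n$. Let $c=\ln(1/\delta)$ and $p=p(S)$. Define $$f_l(\mathcal{R},\delta)=\min\left\{\hat{\mathbb{B}}(S)-\frac{\rho c\Gamma}{3T},\ \hat{\mathbb{B}}(S)-\frac{\Gamma}{T}\left(\frac{\rho c}{3}-cp+\sqrt{\Big(\frac{\rho c}{3}-cp\Big)^2+2Tpc\frac{\hat{\mathbb{B}}(S)}{\Gamma}}\right)\right\}.$$ Then $\Pr[\mathbb{B}(S)\ge f_l(\mathcal{R},\delta)]\ge1-\delta$.
   Context: Setting: $G=(V,E)$ is a directed graph under the Independent Cascade model with edge probabilities $p(u,v)\in(0,1)$. A random live-edge graph $g$ keeps each edge $e$ independently with probability $p(e)$, and $R(g,S)$ is the set of nodes reachable from $S$ in $g$. Each node has benefit $b(u)\ge0$. The benefit function is $\mathbb{B}(S)=\mathbb{E}_g[\sum_{u\in R(g,S)}b(u)]$. Let $\Gamma=\sum_u b(u)>0$. For each node $u$, $\gamma(u)=1-\prod_{v\in N_{in}(u)}(1-p(v,u))$, and $\Phi=\sum_u\gamma(u)b(u)>0$. IBS distribution $\Omega^n$: pick a source $u$ with probability $\gamma(u)b(u)/\Phi$. Then output the set of nodes that can reach $u$ in a random live-edge graph, conditioned on at least one in-edge of $u$ being kept. For a collection $\mathcal{R}=\{R_1,\dots,R_T\}$ of IBSs, the estimator is $$\hat{\mathbb{B}}(S)=\frac{\Phi}{T}\sum_{j=1}^T\min\{1,|S\cap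 R_j|\}+\sum_{v\in S}(1-\gamma(v))b(v).$$ Further definitions: - $\mu_{\min}(S)=\sum_{v\in S}(1-\gamma(v))b(v)/\Gamma$; - $\rho=\Phi/\Gamma$; - $\mu_{\max}(S)=\rho+\mu_{\min}(S)$; - $p(S)=\min\{\rho,\ \mu_{\max}(S)+\mu_{\min}(S)-2\sqrt{\mu_{\min}(S)\mu_{\max}(S)}\}$. *)

From mathcomp Require Import all_boot.
From Stdlib Require Import Reals.
Set Implicit Arguments. Unset Strict Implicit. Unset Printing Implicit Defensive.

Open Scope R_scope.

Section IBS.
Variable V : finType.
Variable E : {set V * V}.
Variable p : V -> V -> R.
Variable b : V -> R.

Definition rsum {I : finType} (P : pred I) (F : I -> R) : R :=
  \big[Rplus/0]_(i | P i) F i.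
Definition rprod {I : finType} (P : pred I) (F : I -> R) : R :=
  \big[Rmult/1]_(i | P i) F i.

Definition live_prob (g : {set V * V}) : R :=
  if g \subset E then
    rprod (fun e => e \in E) (fun e => if e \in g then p e.1 e.2 else 1 - p e.1 e.2)
  else 0.

Definition live_rel (g : {set V * V}) : rel V := fun x y => (x, y) \in g.

Definition reach (g : {set V * V}) (S : {set V}) : {set V} :=
  [set v | [exists u in S, connect (live_rel g) u v]].

Definition benefit (S : {set V}) : R :=
  rsum predT (fun g : {set V * V} =>
    live_prob g * rsum (fun u => u \in reach g S) b).

Definition Gamma : R := rsum predT b.

Definition gamma (u : V) : R :=
  1 - rprod (fun v => (v, u) \in E) (fun v => 1 - p v u).

Definition Phi : R := rsum predT (fun u => gamma u * b u).

Definition rrset (g : {set V * V}) (u : V) : {set V} :=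
  [set v | connect (live_rel g) v u].

Definition in_kept (g : {set V * V}) (u : V) : bool :=
  [exists v, ((v, u) \in E) && ((v, u) \in g)].

(* probability that an IBS drawn from Omega^n equals Rset:
   source u with prob gamma(u) b(u) / Phi, then the reverse-reachable set of u
   in a random live-edge graph, conditioned on in_kept g u *)
Definition ibs_prob (Rset : {set V}) : R :=
  rsum predT (fun u =>
    (gamma u * b u / Phi) *
    (rsum (fun g => in_kept g u && (rrset g u == Rset)) live_prob /
     rsum (fun g => in_kept g u) live_prob)).

Definition sample_prob (T : nat) (Rs : {ffun 'I_T -> {set V}}) : R :=
  rprod predT (fun j => ibs_prob (Rs j)).

(* probability of an event on the collection (a Prop, made decidable classically
   through the real order decision in the uses below) *)
Definition sample_Pr (T : nat) (ev : {ffun 'I_T -> {set V}} -> bool) : R :=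
  rsum ev (@sample_prob T).

Definition Bhat (S : {set V}) (T : nat) (Rs : {ffun 'I_T -> {set V}}) : R :=
  Phi / INR T * rsum predT (fun j : 'I_T => INR (minn 1 #|S :&: Rs j|))
  + rsum (fun v => v \in S) (fun v => (1 - gamma v) * b v).

Definition mu_min (S : {set V}) : R :=
  rsum (fun v => v \in S) (fun v => (1 - gamma v) * b v) / Gamma.
Definition rho : R := Phi / Gamma.
Definition mu_max (S : {set V}) : R := rho + mu_min S.
Definition pS (S : {set V}) : R :=
  Rmin rho (mu_max S + mu_min S - 2 * sqrt (mu_min S * mu_max S)).

Definition f_l (S : {set V}) (T : nat) (Rs : {ffun 'I_T -> {set V}}) (delta : R) : R :=
  let c := ln (1 / delta) in
  let q := pS S in
  let B := Bhat S Rs in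
  Rmin (B - rho * c * Gamma / (3 * INR T))
       (B - Gamma / INR T *
            (rho * c / 3 - c * q
             + sqrt ((rho * c / 3 - c * q) ^ 2 + 2 * INR T * q * c * (B / Gamma)))).

Definition Rleb (x y : R) : bool := if Rle_dec x y then true else false.

End IBS.

(* Each IBS [R] contributes [X = min {1, |S ∩ R|}], a Bernoulli variable with mean [q],
   and the benefit decomposes exactly as [B(S) = Phi q + sum_(v in S) (1 - gamma v) b v]
   (the conditioning on a kept in-edge is compensated by the source weight [gamma u]).
   Hence [T (Bhat(S) - B(S)) / Gamma] is a sum of [T] i.i.d. centred variables
   [rho (X_j - q) <= rho] of variance [rho^2 q (1 - q) <= p(S) B(S) / Gamma].
   Bernstein's inequality, obtained from [e^x <= 1 + x + 3 x^2 / (2 (3 - c))] for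
   [x <= c < 3], bounds by [delta] the probability that this sum exceeds the radius [t]
   solving [t^2 = 2 ln(1/delta) (T p(S) B(S) / Gamma + rho t / 3)]; and [B(S) < f_l]
   forces the sum beyond that radius. *)

From HB Require Import structures.
From mathcomp Require Import all_boot.
From Stdlib Require Import Reals Lra Psatz.
From Coquelicot Require Import Coquelicot.
Set Implicit Arguments. Unset Strict Implicit.
Open Scope R_scope.

Lemma exp_le_quadratic_nonpos x : x <= 0 -> exp x <= 1 + x + x ^ 2 / 2.
Proof.
move=> hx; case: (Req_dec x 0) => [->|hx0]; first by rewrite exp_0; lra.
set h := fun y => 1 + y + y ^ 2 / 2 - exp y.
have [c [hmvt hc]] : exists c, h 0 - h x = (1 + c - exp c) * (0 - x) /\ x < c < 0.
  apply: (MVT_cor2 h (fun c => 1 + c - exp c)); first lra.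
  by move=> c _; apply/is_derive_Reals; rewrite /h; auto_derive => //; field.
have := exp_ineq1_le c; have : h 0 = 0 by rewrite /h exp_0; lra.
rewrite /h in hmvt *; nra.
Qed.

(* [(1 + y + 3y^2/(2(3-y))) e^(-y)] is nondecreasing on [[0, 3)]: its derivative is
   [y^3 e^(-y) / (2(3-y)^2)]. *)
Lemma exp_le_bernstein_nonneg x : 0 <= x < 3 ->
  exp x <= 1 + x + 3 * x ^ 2 / (2 * (3 - x)).
Proof.
move=> [hx0 hx3]; case: (Req_dec x 0) => [->|hx]; first by rewrite exp_0; lra.
set phi := fun y => (1 + y + 3 * y ^ 2 / (2 * (3 - y))) * exp (- y).
have [c [hmvt hc]] : exists c, phi x - phi 0 =
    (c ^ 3 / (2 * (3 - c) ^ 2) * exp (- c)) * (x - 0) /\ 0 < c < x.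
  apply: (MVT_cor2 phi (fun c => c ^ 3 / (2 * (3 - c) ^ 2) * exp (- c))); first lra.
  move=> c hc; apply/is_derive_Reals; rewrite /phi; auto_derive; first lra.
  by field; lra.
have hphi0 : phi 0 = 1 by rewrite /phi Ropp_0 exp_0; field.
have hslope : 0 <= c ^ 3 / (2 * (3 - c) ^ 2) * exp (- c) * (x - 0).
  apply: Rmult_le_pos; last lra.
  apply: Rmult_le_pos; last exact: Rlt_le (exp_pos _).
  apply: Rdiv_le_0_compat; first by apply: pow_le; lra.
  have h3c : 0 < 3 - c by lra.
  nra.
have hphix : 1 <= phi x by lra.
have hinv : exp x * exp (- x) = 1 by rewrite -exp_plus Rplus_opp_r exp_0.
have := exp_pos x; have := exp_pos (- x).
have := Rmult_le_compat_l _ _ _ (Rlt_le _ _ (exp_pos x)) hphix.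
rewrite /phi; nra.
Qed.

Lemma exp_le_bernstein x c : 0 <= c < 3 -> x <= c ->
  exp x <= 1 + x + 3 / (2 * (3 - c)) * x ^ 2.
Proof.
move=> hc hxc.
have hK : 1 / 2 <= 3 / (2 * (3 - c)).
  apply: (Rmult_le_reg_r (2 * (3 - c))); first lra.
  by rewrite (_ : 3 / (2 * (3 - c)) * (2 * (3 - c)) = 3); [lra | field; lra].
have hx2 := pow2_ge_0 x.
case: (Rle_lt_dec x 0) => hx0.
  have := exp_le_quadratic_nonpos hx0.
  have := Rmult_le_compat_r _ _ _ hx2 hK; lra.
have := exp_le_bernstein_nonneg (conj (Rlt_le _ _ hx0) (Rle_lt_trans _ _ _ hxc (proj2 hc))).
have : 3 * x ^ 2 / (2 * (3 - x)) <= 3 / (2 * (3 - c)) * x ^ 2.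
  rewrite (_ : 3 * x ^ 2 / (2 * (3 - x)) = 3 / (2 * (3 - x)) * x ^ 2); last by field; lra.
  apply: Rmult_le_compat_r => //; apply: Rmult_le_compat_l; first lra.
  apply: Rinv_le_contravar; lra.
lra.
Qed.

(* The positive root [t] of [t^2 = 2 c (T v + r t / 3)], i.e. of
   [exp (- t^2 / (2 (T v + r t / 3))) = exp (- c)] in Bernstein's inequality. *)
Definition bernstein_radius (r c T v : R) : R :=
  r * c / 3 + sqrt ((r * c / 3) ^ 2 + 2 * c * T * v).

Lemma bernstein_radius_spec r c T v : 0 < r -> 0 < c -> 0 <= T * v ->
  0 < bernstein_radius r c T v /\
  bernstein_radius r c T v ^ 2 = 2 * c * (T * v + r * bernstein_radius r c T v / 3).
Proof.
move=> hr hc hTv; rewrite /bernstein_radius.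
set a := r * c / 3; set w := a ^ 2 + 2 * c * T * v.
have ha : 0 < a by rewrite /a; apply: Rdiv_lt_0_compat; [apply: Rmult_lt_0_compat|]; lra.
have hw : 0 <= w by rewrite /w; have := pow2_ge_0 a; nra.
have := sqrt_sqrt _ hw; have := sqrt_pos w.
rewrite /w /a; split; nra.
Qed.

Lemma bernstein_exponent r c T v : 0 < T -> 0 < r -> 0 < c -> 0 <= v ->
  exists lam, [/\ 0 <= lam, lam * r < 3 &
    - lam * bernstein_radius r c T v + T * (3 / (2 * (3 - lam * r))) * lam ^ 2 * v = - c].
Proof.
move=> hT hr hc hv.
have [ht ht2] := @bernstein_radius_spec r c T v hr hc (Rmult_le_pos _ _ (Rlt_le _ _ hT) hv).
set t := bernstein_radius r c T v in ht ht2 *; clearbody t.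
case: (Req_dec v 0) => [hv0|hv0].
  have htr : t = 2 * (r * c / 3) by rewrite hv0 Rmult_0_r Rplus_0_l in ht2; nra.
  exists (3 / (2 * r)); split.
  - by apply: Rlt_le; apply: Rdiv_lt_0_compat; lra.
  - by rewrite (_ : 3 / (2 * r) * r = 3 / 2); [lra | field; lra].
  - by rewrite hv0 htr; field; lra.
have hTv : 0 < T * v by apply: Rmult_lt_0_compat; lra.
have [D [eD hD]] : exists D, D = T * v + r * t / 3 /\ 0 < D.
  by eexists; split; [reflexivity | have := Rmult_lt_0_compat _ _ hr ht; lra].
rewrite -eD in ht2.
have hgap : 3 - t / D * r = 3 * (T * v) / D by rewrite eD; field; lra.
exists (t / D); split.
- by apply: Rlt_le; apply: Rdiv_lt_0_compat.
- by have := Rdiv_lt_0_compat _ _ (Rmult_lt_0_compat 3 _ ltac:(lra) hTv) hD; lra.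
- rewrite hgap (_ : - (t / D) * t + T * (3 / (2 * (3 * (T * v) / D))) * (t / D) ^ 2 * v
                   = - t ^ 2 / (2 * D)); last by field; lra.
  by rewrite ht2; field; lra.
Qed.

Definition variance_coef (r mn : R) : R :=
  Rmin r ((r + mn) + mn - 2 * sqrt (mn * (r + mn))).

Lemma variance_coef_ge0 r mn : 0 < r -> 0 <= mn -> 0 <= variance_coef r mn.
Proof.
move=> hr hmn; rewrite /variance_coef; apply: Rmin_glb; first lra.
rewrite sqrt_mult_alt //.
have := sqrt_sqrt _ hmn; have := sqrt_sqrt (r + mn) ltac:(lra).
have := pow2_ge_0 (sqrt mn - sqrt (r + mn)); nra.
Qed.

(* With [m = r q + mn], the variance [r^2 q (1 - q)] of [r X], [X ~ Bernoulli q], is at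
   most [r m] and at most [(sqrt (mn + r) - sqrt mn)^2 m]; the second bound is the square
   [(m - sqrt (mn (r + mn)))^2 >= 0] in disguise. *)
Lemma variance_le_coef_mean r q mn : 0 < r -> 0 <= q <= 1 -> 0 <= mn ->
  r ^ 2 * (q * (1 - q)) <= variance_coef r mn * (r * q + mn).
Proof.
move=> hr hq hmn; rewrite /variance_coef.
case: (Rle_lt_dec r ((r + mn) + mn - 2 * sqrt (mn * (r + mn)))) => hmin.
  rewrite Rmin_left //.
  have : 0 <= r * q * q by apply: Rmult_le_pos; [apply: Rmult_le_pos|]; lra.
  have : 0 <= r * mn by apply: Rmult_le_pos; lra.
  nra.
rewrite Rmin_right; last lra.
rewrite sqrt_mult_alt //.
set x := sqrt mn; set y := sqrt (r + mn).
have hx : x * x = mn by exact: sqrt_sqrt.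
have hy : y * y = r + mn by apply: sqrt_sqrt; lra.
have hsq : (r + mn + mn - 2 * (x * y)) * (r * q + mn) - r ^ 2 * (q * (1 - q))
           = (r * q + mn - x * y) ^ 2.
  rewrite -hx (_ : r = y * y - x * x); first ring; lra.
have := pow2_ge_0 (r * q + mn - x * y); lra.
Qed.

(* The [Rmin] is [f_l] with [G = Gamma], [Bh = Bhat S] and [P = p(S)]. *)
Lemma below_lower_bound_deviation G T r c P B Bh :
  0 < G -> 0 < T -> 0 < r -> 0 < c -> 0 <= P -> 0 <= B ->
  B < Rmin (Bh - r * c * G / (3 * T))
           (Bh - G / T * (r * c / 3 - c * P
                  + sqrt ((r * c / 3 - c * P) ^ 2 + 2 * T * P * c * (Bh / G)))) ->
  bernstein_radius r c T (P * (B / G)) < T * (Bh - B) / G.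
Proof.
move=> hG hT hr hc hP hB hlt.
have h1 := Rlt_le_trans _ _ _ hlt (Rmin_l _ _).
have h2 := Rlt_le_trans _ _ _ hlt (Rmin_r _ _).
rewrite /bernstein_radius.
set a := r * c / 3 in h2 *; set s := T * (Bh - B) / G; set m := B / G.
have ha : 0 < a by rewrite /a; apply: Rdiv_lt_0_compat; [apply: Rmult_lt_0_compat|]; lra.
have hm : 0 <= m by apply: Rdiv_le_0_compat.
have hGT : 0 < G / T by apply: Rdiv_lt_0_compat.
have hBh : Bh = G * m + G / T * s by rewrite /m /s; field; lra.
have hrcG : r * c * G / (3 * T) = G / T * a by rewrite /a; field; lra.
have hBm : B = G * m by rewrite /m; field; lra.
clearbody a s m; subst B.
have has : a < s by move: h1; rewrite hBh hrcG; nra.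
have hBhG : Bh / G = m + s / T by rewrite hBh; field; lra.
rewrite hBhG hBh in h2.
set w := (a - c * P) ^ 2 + 2 * T * P * c * (m + s / T) in h2.
have hsqrt : sqrt w < s - a + c * P by nra.
have hw : w < (s - a + c * P) ^ 2.
  case: (Rle_lt_dec 0 w) => hw0; last by have := pow2_ge_0 (s - a + c * P); lra.
  have := sqrt_sqrt _ hw0; have := sqrt_pos w; nra.
have hgoal : a ^ 2 + 2 * c * T * (P * m) < (s - a) ^ 2.
  move: hw; rewrite /w (_ : 2 * T * P * c * (m + s / T) = 2 * c * T * (P * m) + 2 * c * P * s);
    last by field; lra.
  nra.
have hW : 0 <= a ^ 2 + 2 * c * T * (P * m).
  have := pow2_ge_0 a; have : 0 <= c * T * (P * m).
    by apply: Rmult_le_pos; apply: Rmult_le_pos; lra.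
  lra.
have := sqrt_lt_1_alt _ _ (conj hW hgoal); rewrite sqrt_pow2; lra.
Qed.

HB.instance Definition _ := Monoid.isComLaw.Build R 0 Rplus
  (fun x y z => esym (Rplus_assoc x y z)) Rplus_comm Rplus_0_l.
HB.instance Definition _ := Monoid.isComLaw.Build R 1 Rmult
  (fun x y z => esym (Rmult_assoc x y z)) Rmult_comm Rmult_1_l.
HB.instance Definition _ := Monoid.isMulLaw.Build R 0 Rmult Rmult_0_l Rmult_0_r.
HB.instance Definition _ := Monoid.isAddLaw.Build R Rmult Rplus
  Rmult_plus_distr_r Rmult_plus_distr_l.

Section FiniteSums.
Variable I : finType.
Implicit Types (P : pred I) (F G : I -> R).

Lemma eq_rsum P F G : (forall i, P i -> F i = G i) -> rsum P F = rsum P G.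
Proof. exact: eq_bigr. Qed.

Lemma rsum_ge0 P F : (forall i, P i -> 0 <= F i) -> 0 <= rsum P F.
Proof. by move=> h; apply: (big_ind (fun x => 0 <= x)) => //; [lra | move=> x y; lra]. Qed.

Lemma rsum_le P F G : (forall i, P i -> F i <= G i) -> rsum P F <= rsum P G.
Proof.
by move=> h; apply: (big_ind2 (fun x y => x <= y)) => //; [lra | move=> x1 x2 y1 y2; lra].
Qed.

Lemma rsum_split P F G : rsum P (fun i => F i + G i) = rsum P F + rsum P G.
Proof. exact: big_split. Qed.

Lemma rsum_scale P k F : rsum P (fun i => k * F i) = k * rsum P F.
Proof. by rewrite /rsum big_distrr. Qed.

Lemma rsum_sub P F G : rsum P (fun i => F i - G i) = rsum P F - rsum P G.
Proof.
rewrite (@eq_rsum P _ (fun i => F i + -1 * G i)) ?rsum_split ?rsum_scale; first ring.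
by move=> i _; ring.
Qed.

Lemma rsum_complement P F : rsum predT F = rsum P F + rsum (fun i => ~~ P i) F.
Proof. exact: bigID. Qed.

Lemma rsum_const_ord (n : nat) k : rsum predT (fun _ : 'I_n => k) = INR n * k.
Proof.
rewrite /rsum big_const_ord; elim: n => [|n IH]; first by rewrite /= Rmult_0_l.
by rewrite iterS IH S_INR; ring.
Qed.

Lemma rprod_ge0 P F : (forall i, P i -> 0 <= F i) -> 0 <= rprod P F.
Proof.
by move=> h; apply: (big_ind (fun x => 0 <= x)) => //; [lra | move=> x y; apply: Rmult_le_pos].
Qed.

Lemma rprod_le P F G : (forall i, P i -> 0 <= F i <= G i) -> rprod P F <= rprod P G.
Proof.
move=> h; suff [] : 0 <= rprod P F <= rprod P G by [].
apply: (big_ind2 (fun x y => 0 <= x <= y)) => //; first lra.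
move=> x1 x2 y1 y2 [h1 h2] [h3 h4]; split; first exact: Rmult_le_pos.
exact: Rmult_le_compat.
Qed.

Lemma exp_rsum P F : exp (rsum P F) = rprod P (fun i => exp (F i)).
Proof.
by apply: (big_morph exp); [move=> x y; rewrite exp_plus | rewrite exp_0].
Qed.

End FiniteSums.

Lemma rprod_exp_const T k : rprod predT (fun _ : 'I_T => exp k) = exp (INR T * k).
Proof. by rewrite -exp_rsum rsum_const_ord. Qed.

Lemma rprod_rsum (I J : finType) (F : I -> J -> R) :
  rprod predT (fun i => rsum predT (F i)) =
  rsum predT (fun f : {ffun I -> J} => rprod predT (fun i => F i (f i))).
Proof. exact: bigA_distr_bigA. Qed.

Lemma rsum_set_rprod (W : finType) (F : W -> bool -> R) :
  rsum predT (fun g : {set W} => rprod predT (fun e => F e (e \in g))) =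
  rprod predT (fun e => F e true + F e false).
Proof.
transitivity (rprod predT (fun e => rsum predT (F e))); last first.
  by apply: eq_bigr => e _; rewrite /rsum big_bool.
rewrite rprod_rsum /rsum (reindex (fun f : {ffun W -> bool} => [set e | f e])) /=.
  by apply: eq_bigr => f _; apply: eq_bigr => e _; rewrite inE.
exists (fun g : {set W} => [ffun e => e \in g]).
  by move=> f _; apply/ffunP => e; rewrite ffunE inE.
by move=> g _; apply/setP => e; rewrite inE ffunE.
Qed.

Section LiveEdge.
Variables (V : finType) (E : {set V * V}) (p : V -> V -> R).
Hypothesis hp : forall e, e \in E -> 0 < p e.1 e.2 < 1.

Definition edge_prob (e : V * V) (kept : bool) : R :=
  if e \in E then (if kept then p e.1 e.2 else 1 - p e.1 e.2) else (if kept then 0 else 1).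

Lemma live_probE g : live_prob E p g = rprod predT (fun e => edge_prob e (e \in g)).
Proof.
rewrite /live_prob /rprod /edge_prob; case: ifP => hsub.
  rewrite big_mkcond /=; apply: eq_bigr => e _.
  case: ifP => // heE; case: ifP => // heg.
  by move/subsetP: hsub => /(_ e heg); rewrite heE.
have [e heg heE] := subsetPn (negbT hsub).
by rewrite (bigD1 e) //= (negbTE heE) heg Rmult_0_l.
Qed.

Lemma live_prob_ge0 g : 0 <= live_prob E p g.
Proof.
rewrite live_probE; apply: rprod_ge0 => e _; rewrite /edge_prob.
case: ifP => [/hp|_]; case: (e \in g); lra.
Qed.

Lemma live_prob_subset g : live_prob E p g <> 0 -> g \subset E.
Proof. by rewrite /live_prob; case: ifP. Qed.

Lemma live_prob_sum1 : rsum predT (live_prob E p) = 1.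
Proof.
under eq_rsum => g _ do rewrite live_probE.
by rewrite rsum_set_rprod /rprod big1 // => e _; rewrite /edge_prob; case: ifP => _; lra.
Qed.

Lemma live_prob_not_in_kept u :
  rsum (fun g => ~~ in_kept E g u) (live_prob E p) =
  rprod (fun v => (v, u) \in E) (fun v => 1 - p v u).
Proof.
(* Restricted to [~~ in_kept g u], the law of [g] is still a product over edges: each
   in-edge of [u] gets weight [0] for being kept. *)
pose F e kept := edge_prob e kept * (if [&& e \in E, e.2 == u & kept] then 0 else 1).
have hF g : (if ~~ in_kept E g u then live_prob E p g else 0) =
            rprod predT (fun e => F e (e \in g)).
  rewrite live_probE /rprod /F big_split /=; case: ifP => hk.
    rewrite [X in _ = _ * X]big1 ?Rmult_1_r // => e _.
    case: ifP => // /and3P [heE /eqP hu heg]; case/negP: hk.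
    by apply/existsP; exists e.1; rewrite -hu -surjective_pairing heE heg.
  have /existsP [v /andP [h1 h2]] := negbFE hk.
  by rewrite [X in _ = _ * X](bigD1 (v, u)) //= h1 h2 eqxx Rmult_0_l Rmult_0_r.
rewrite /rsum big_mkcond /=; under eq_bigr => g _ do rewrite hF.
rewrite -/(rsum _ _) rsum_set_rprod /rprod.
transitivity (\big[Rmult/1]_(x : V) \big[Rmult/1]_(y : V)
                (if ((x, y) \in E) && (y == u) then 1 - p x y else 1)).
  rewrite pair_bigA; apply: eq_bigr => -[x y] _ /=; rewrite /F /edge_prob /=.
  by case: ((x, y) \in E); case: (y == u) => /=; lra.
rewrite [RHS]big_mkcond; apply: eq_bigr => x _.
rewrite (bigD1 u) //= eqxx andbT big1 ?Rmult_1_r // => y /negbTE ->.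
by rewrite andbF.
Qed.

Lemma live_prob_in_kept u : rsum (fun g => in_kept E g u) (live_prob E p) = gamma E p u.
Proof.
rewrite /gamma -live_prob_not_in_kept -live_prob_sum1.
rewrite (rsum_complement (fun g => in_kept E g u)); lra.
Qed.

Lemma gamma_bounds u : 0 <= gamma E p u <= 1.
Proof.
rewrite -live_prob_in_kept; have := live_prob_sum1.
rewrite (rsum_complement (fun g => in_kept E g u)).
have := @rsum_ge0 _ (fun g => in_kept E g u) _ (fun g _ => live_prob_ge0 g).
have := @rsum_ge0 _ (fun g => ~~ in_kept E g u) _ (fun g _ => live_prob_ge0 g).
lra.
Qed.

End LiveEdge.

Lemma Rmult_div_dominated g a : 0 <= a <= g -> g * (a / g) = a.
Proof.
move=> ha; case: (Req_dec g 0) => [hg|hg]; last by field.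
by rewrite hg Rmult_0_l; lra.
Qed.

Lemma Rdiv_nonneg a x : 0 <= a -> 0 <= x -> 0 <= a / x.
Proof.
move=> ha hx; case: (Req_dec x 0) => [->|hx0]; first by rewrite /Rdiv Rinv_0 Rmult_0_r; lra.
by apply: Rdiv_le_0_compat; lra.
Qed.

Section IBS.
Variables (V : finType) (E : {set V * V}) (p : V -> V -> R) (b : V -> R).
Hypothesis hp : forall e, e \in E -> 0 < p e.1 e.2 < 1.
Hypothesis hb : forall u, 0 <= b u.
Hypothesis hPhi : 0 < Phi E p b.

Lemma ibs_expectation (h : {set V} -> R) :
  rsum predT (fun Rs => ibs_prob E p b Rs * h Rs) =
  rsum predT (fun u => gamma E p u * b u / Phi E p b *
    (rsum (fun g => in_kept E g u) (fun g => live_prob E p g * h (rrset g u)) / gamma E p u)).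
Proof.
rewrite /ibs_prob /rsum; under eq_bigr => Rs _ do rewrite big_distrl /=.
rewrite exchange_big; apply: eq_bigr => u _ /=.
rewrite -live_prob_in_kept /rsum /Rdiv.
set K := \big[Rplus/0]_(g | in_kept E g u) live_prob E p g.
set c := K * b u * / Phi E p b.
transitivity (c * / K * \big[Rplus/0]_Rs
  (\big[Rplus/0]_(g | in_kept E g u && (rrset g u == Rs)) live_prob E p g * h Rs)).
  by rewrite big_distrr; apply: eq_bigr => Rs _ /=; ring.
rewrite [in RHS](Rmult_comm _ (/ K)) -Rmult_assoc; congr (_ * _).
rewrite (partition_big (fun g => rrset g u) predT) //=; apply: eq_bigr => Rs _.
by rewrite big_distrl /=; apply: eq_bigr => g /andP [_ /eqP ->].
Qed.

(* Conditioning on [in_kept g u] costs a factor [1 / gamma u], which the source weight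
   [gamma u b u / Phi] cancels (when [gamma u = 0] both sides vanish). *)
Lemma ibs_expectation_scaled (h : {set V} -> R) : (forall Rs, 0 <= h Rs <= 1) ->
  Phi E p b * rsum predT (fun Rs => ibs_prob E p b Rs * h Rs) =
  rsum predT (fun u => b u *
    rsum (fun g => in_kept E g u) (fun g => live_prob E p g * h (rrset g u))).
Proof.
move=> h01; rewrite ibs_expectation -rsum_scale; apply: eq_bigr => u _.
set A := rsum _ _.
have hA : 0 <= A <= gamma E p u.
  rewrite -live_prob_in_kept; split.
    by apply: rsum_ge0 => g _; apply: Rmult_le_pos; [apply: live_prob_ge0 | case: (h01 (rrset g u))].
  apply: rsum_le => g _; have := live_prob_ge0 hp g; have [] := h01 (rrset g u); nra.
rewrite -[in RHS](Rmult_div_dominated hA); move: (A / _) => x; field; lra.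
Qed.

Lemma ibs_prob_ge0 Rs : 0 <= ibs_prob E p b Rs.
Proof.
apply: rsum_ge0 => u _; have [hg _] := gamma_bounds hp u.
have hlive P : 0 <= rsum P (live_prob E p) by apply: rsum_ge0 => g _; apply: live_prob_ge0.
apply: Rmult_le_pos; apply: Rdiv_nonneg => //; last lra.
exact: Rmult_le_pos.
Qed.

Lemma ibs_prob_sum1 : rsum predT (ibs_prob E p b) = 1.
Proof.
have := @ibs_expectation_scaled (fun _ => 1) (fun _ => conj Rle_0_1 (Rle_refl 1)).
have -> : rsum predT (fun Rs => ibs_prob E p b Rs * 1) = rsum predT (ibs_prob E p b).
  by apply: eq_bigr => Rs _; rewrite Rmult_1_r.
have -> : rsum predT (fun u => b u * rsum (fun g => in_kept E g u)
            (fun g => live_prob E p g * 1)) = Phi E p b.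
  apply: eq_bigr => u _; rewrite -live_prob_in_kept Rmult_comm; congr (_ * _).
  by apply: eq_bigr => g _; rewrite Rmult_1_r.
by move=> h; apply: (Rmult_eq_reg_l (Phi E p b)); lra.
Qed.

Definition hit (S Rs : {set V}) : R := INR (minn 1 #|S :&: Rs|).

Lemma hit_01 S Rs : hit S Rs = 0 \/ hit S Rs = 1.
Proof.
rewrite /hit; case: #|_| => [|k]; first by left.
by right; rewrite (minn_idPl (ltn0Sn k)).
Qed.

Lemma hit_bounds S Rs : 0 <= hit S Rs <= 1.
Proof. by case: (hit_01 S Rs) => ->; lra. Qed.

Lemma hit_rrset S g u : hit S (rrset g u) = if u \in reach g S then 1 else 0.
Proof.
rewrite /hit /reach inE; case: ifP.
  case/existsP => v /andP [hv hc].
  have h1 : leq 1 #|S :&: rrset g u| by apply/card_gt0P; exists v; rewrite !inE hv.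
  by rewrite (minn_idPl h1).
move/negbT => hn; suff -> : #|S :&: rrset g u| = O by [].
apply/eqP; rewrite cards_eq0; apply/eqP/setP => v; rewrite !inE.
by apply/negP => /andP [hv hc]; case/negP: hn; apply/existsP; exists v; rewrite hv.
Qed.

Lemma reach_in_kept S g u :
  u \in reach g S -> u \notin S -> g \subset E -> in_kept E g u.
Proof.
rewrite /reach inE => /existsP [v /andP [hv /connectP [q hq hl]]] huS hsub.
case/lastP: q hq hl => [|q w] /=; first by move=> _ hvu; move: huS; rewrite hvu hv.
rewrite rcons_path last_rcons => /andP [_ he] hw; subst w.
by apply/existsP; exists (last v q); rewrite /live_rel in he; rewrite (subsetP hsub _ he) he.
Qed.

Lemma benefit_by_node S : benefit E p b S =
  rsum predT (fun u => b u * rsum predT (fun g =>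
    live_prob E p g * (if u \in reach g S then 1 else 0))).
Proof.
rewrite /benefit /rsum.
transitivity (\big[Rplus/0]_g \big[Rplus/0]_u
                (live_prob E p g * (if u \in reach g S then b u else 0))).
  apply: eq_bigr => g _; rewrite big_distrr /= big_mkcond /=.
  by apply: eq_bigr => u _; case: ifP; rewrite ?Rmult_0_r.
rewrite exchange_big /=; apply: eq_bigr => u _; rewrite big_distrr /=.
by apply: eq_bigr => g _; case: ifP => _; ring.
Qed.

Lemma reach_prob S u :
  rsum predT (fun g => live_prob E p g * (if u \in reach g S then 1 else 0)) =
  rsum (fun g => in_kept E g u) (fun g => live_prob E p g * hit S (rrset g u))
  + (if u \in S then 1 - gamma E p u else 0).
Proof.
rewrite (rsum_complement (fun g => in_kept E g u)); congr (_ + _).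
  by apply: eq_bigr => g _; rewrite hit_rrset.
case: ifP => huS.
  rewrite /gamma -live_prob_not_in_kept (_ : forall x, 1 - (1 - x) = x); last by move=> x; ring.
  apply: eq_bigr => g _; suff -> : u \in reach g S by rewrite Rmult_1_r.
  by rewrite /reach inE; apply/existsP; exists u; rewrite huS connect0.
apply: big1 => g hk; case: (Req_dec (live_prob E p g) 0) => [->|hl]; first exact: Rmult_0_l.
case: ifP => hr; last exact: Rmult_0_r.
by have := reach_in_kept hr (negbT huS) (live_prob_subset hl); rewrite (negbTE hk).
Qed.

Lemma benefit_ibsE S : benefit E p b S =
  Phi E p b * rsum predT (fun Rs => ibs_prob E p b Rs * hit S Rs)
  + rsum (fun v => v \in S) (fun v => (1 - gamma E p v) * b v).
Proof.
rewrite ibs_expectation_scaled; last exact: hit_bounds.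
rewrite benefit_by_node.
under eq_rsum => u _ do rewrite reach_prob Rmult_plus_distr_l.
rewrite rsum_split; congr (_ + _).
rewrite /rsum [RHS]big_mkcond; apply: eq_bigr => u _.
by case: ifP; rewrite ?Rmult_0_r // Rmult_comm.
Qed.

End IBS.

Section Concentration.
Variables (V : finType) (E : {set V * V}) (p : V -> V -> R) (b : V -> R).
Hypothesis hp : forall e, e \in E -> 0 < p e.1 e.2 < 1.
Hypothesis hb : forall u, 0 <= b u.
Hypothesis hPhi : 0 < Phi E p b.
Hypothesis hGamma : 0 < Gamma b.

Lemma sample_prob_sum1 T : rsum predT (@sample_prob _ E p b T) = 1.
Proof.
rewrite /sample_prob -(rprod_rsum (fun (_ : 'I_T) Rs => ibs_prob E p b Rs)).
by rewrite /rprod big1 // => j _; apply: ibs_prob_sum1.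
Qed.

Lemma sample_chernoff T (Z : {set V} -> R) (ev : pred {ffun 'I_T -> {set V}}) lam t :
  0 <= lam -> (forall Rs, ev Rs -> t < rsum predT (fun j => Z (Rs j))) ->
  sample_Pr E p b ev <= exp (- lam * t) *
    rprod predT (fun _ : 'I_T => rsum predT (fun Rs => ibs_prob E p b Rs * exp (lam * Z Rs))).
Proof.
move=> hlam hev.
rewrite rprod_rsum -rsum_scale /sample_Pr /rsum big_mkcond; apply: rsum_le => Rs _.
have hsp : 0 <= sample_prob E p b Rs by apply: rprod_ge0 => j _; apply: ibs_prob_ge0.
rewrite /rprod big_split -/(rprod _ _) -/(sample_prob E p b Rs) /=.
rewrite -/(rprod predT (fun j : 'I_T => exp (lam * Z (Rs j)))).
rewrite -(exp_rsum predT (fun j => lam * Z (Rs j))) rsum_scale.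
rewrite Rmult_comm Rmult_assoc -exp_plus.
case: ifP => [/hev hlt|_]; last by apply: Rmult_le_pos => //; apply: Rlt_le; apply: exp_pos.
move: (rsum _ _) hlt => s hlt.
have h1 : 1 <= exp (lam * s + - lam * t) by have := exp_ineq1_le (lam * s + - lam * t); nra.
by have := Rmult_le_compat_l _ _ _ hsp h1; rewrite Rmult_1_r.
Qed.

Variable S : {set V}.

Definition ibs_mean : R := rsum predT (fun Rs => ibs_prob E p b Rs * hit S Rs).

(* The centred contribution of one IBS to the estimator, scaled to [Gamma = 1]. *)
Definition deviation (Rs : {set V}) : R := rho E p b * (hit S Rs - ibs_mean).

Lemma ibs_expectation_hit (f : R -> R) :
  rsum predT (fun Rs => ibs_prob E p b Rs * f (hit S Rs)) = f 0 + (f 1 - f 0) * ibs_mean.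
Proof.
transitivity (rsum predT (fun Rs => f 0 * ibs_prob E p b Rs
                                   + (f 1 - f 0) * (ibs_prob E p b Rs * hit S Rs))).
  by apply: eq_rsum => Rs _; case: (hit_01 S Rs) => ->; ring.
by rewrite rsum_split !rsum_scale ibs_prob_sum1 // Rmult_1_r.
Qed.

Lemma ibs_mean_bounds : 0 <= ibs_mean <= 1.
Proof.
split; first by apply: rsum_ge0 => Rs _; apply: Rmult_le_pos; [apply: ibs_prob_ge0 | case: (hit_bounds S Rs)].
rewrite -(ibs_prob_sum1 hp hPhi); apply: rsum_le => Rs _.
by have := ibs_prob_ge0 hp hb hPhi Rs; have [] := hit_bounds S Rs; nra.
Qed.

Lemma rho_pos : 0 < rho E p b.
Proof. exact: Rdiv_lt_0_compat. Qed.

Lemma mgf_deviation_le lam v : 0 <= lam -> lam * rho E p b < 3 ->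
  rho E p b ^ 2 * (ibs_mean * (1 - ibs_mean)) <= v ->
  rsum predT (fun Rs => ibs_prob E p b Rs * exp (lam * deviation Rs)) <=
  exp (3 / (2 * (3 - lam * rho E p b)) * lam ^ 2 * v).
Proof.
move=> hlam hlr hv; have hr := rho_pos; have [hq0 hq1] := ibs_mean_bounds.
have hlr0 : 0 <= lam * rho E p b by apply: Rmult_le_pos; lra.
set K := 3 / (2 * (3 - lam * rho E p b)).
have hK : 0 <= K by apply: Rlt_le; apply: Rdiv_lt_0_compat; lra.
pose f x := 1 + lam * (rho E p b * (x - ibs_mean)) + K * (lam * (rho E p b * (x - ibs_mean))) ^ 2.
apply: Rle_trans (_ : rsum predT (fun Rs => ibs_prob E p b Rs * f (hit S Rs)) <= _).
  apply: rsum_le => Rs _; apply: Rmult_le_compat_l; first exact: ibs_prob_ge0.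
  apply: exp_le_bernstein; first lra.
  by rewrite /deviation; have [] := hit_bounds S Rs; nra.
rewrite ibs_expectation_hit /f.
rewrite (_ : _ + _ = 1 + K * lam ^ 2 * (rho E p b ^ 2 * (ibs_mean * (1 - ibs_mean)))); last by ring.
apply: Rle_trans (exp_ineq1_le _).
have hKl : 0 <= K * lam ^ 2 by apply: Rmult_le_pos => //; apply: pow2_ge_0.
by have := Rmult_le_compat_l _ _ _ hKl hv; lra.
Qed.

Lemma rsum_deviation T (Rs : {ffun 'I_T -> {set V}}) : 0 < INR T ->
  rsum predT (fun j => deviation (Rs j)) = INR T * (Bhat E p b S Rs - benefit E p b S) / Gamma b.
Proof.
move=> hT; rewrite /deviation rsum_scale rsum_sub rsum_const_ord benefit_ibsE //.
have -> : Bhat E p b S Rs = Phi E p b / INR T * rsum predT (fun j => hit S (Rs j))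
          + rsum (fun v => v \in S) (fun v => (1 - gamma E p v) * b v) by [].
rewrite /rho -/ibs_mean; field; lra.
Qed.

Lemma sample_bernstein T c v (ev : pred {ffun 'I_T -> {set V}}) :
  0 < INR T -> 0 < c -> 0 <= v -> rho E p b ^ 2 * (ibs_mean * (1 - ibs_mean)) <= v ->
  (forall Rs, ev Rs -> bernstein_radius (rho E p b) c (INR T) v
                       < rsum predT (fun j => deviation (Rs j))) ->
  sample_Pr E p b ev <= exp (- c).
Proof.
move=> hT hc hv0 hv hev.
have [lam [hlam hlr hexp]] := bernstein_exponent hT rho_pos hc hv0.
apply: Rle_trans (sample_chernoff hlam hev) _.
set K := 3 / (2 * (3 - lam * rho E p b)) in hexp.
have hM : rprod predT (fun _ : 'I_T =>
            rsum predT (fun Rs => ibs_prob E p b Rs * exp (lam * deviation Rs)))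
          <= exp (INR T * (K * lam ^ 2 * v)).
  rewrite -rprod_exp_const; apply: rprod_le => j _; split; last exact: mgf_deviation_le.
  by apply: rsum_ge0 => Rs _; apply: Rmult_le_pos; [apply: ibs_prob_ge0 | apply: Rlt_le; apply: exp_pos].
apply: Rle_trans (Rmult_le_compat_l _ _ _ (Rlt_le _ _ (exp_pos _)) hM) _.
by rewrite -exp_plus -hexp; right; congr exp; ring.
Qed.

End Concentration.

Lemma ln_inv_pos delta : 0 < delta < 1 -> 0 < ln (1 / delta).
Proof.
move=> hd; rewrite -ln_1; apply: ln_increasing; first lra.
rewrite (_ : 1 / delta = / delta); last by field; lra.
by rewrite -Rinv_1; apply: Rinv_lt_contravar; lra.
Qed.

Lemma Rleb_false x y : ~~ Rleb x y -> y < x.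
Proof. by rewrite /Rleb; case: Rle_dec => // h _; apply: Rnot_le_lt. Qed.

Section LowerBound.
Variables (V : finType) (E : {set V * V}) (p : V -> V -> R) (b : V -> R).
Hypothesis hp : forall e, e \in E -> 0 < p e.1 e.2 < 1.
Hypothesis hb : forall u, 0 <= b u.
Hypothesis hGamma : 0 < Gamma b.
Hypothesis hPhi : 0 < Phi E p b.
Variable S : {set V}.

Lemma sample_Pr_complement T (ev : pred {ffun 'I_T -> {set V}}) :
  sample_Pr E p b ev + sample_Pr E p b (fun Rs => ~~ ev Rs) = 1.
Proof. by rewrite -(sample_prob_sum1 hp hPhi T) (rsum_complement ev). Qed.

Lemma mu_min_ge0 : 0 <= mu_min E p b S.
Proof.
apply: Rdiv_le_0_compat => //; apply: rsum_ge0 => v _.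
by have := gamma_bounds hp v; have := hb v; nra.
Qed.

Lemma benefit_ge0 : 0 <= benefit E p b S.
Proof.
apply: rsum_ge0 => g _; apply: Rmult_le_pos; first exact: live_prob_ge0.
by apply: rsum_ge0 => u _.
Qed.

Lemma benefit_normalized :
  benefit E p b S / Gamma b = rho E p b * ibs_mean E p b S + mu_min E p b S.
Proof. by rewrite (benefit_ibsE hp hPhi) /rho /mu_min /ibs_mean; field; lra. Qed.

Lemma pS_variance_coef : pS E p b S = variance_coef (rho E p b) (mu_min E p b S).
Proof. by []. Qed.

Lemma pS_ge0 : 0 <= pS E p b S.
Proof. by rewrite pS_variance_coef; apply: variance_coef_ge0 mu_min_ge0; exact: rho_pos. Qed.

Lemma variance_le_pS :
  rho E p b ^ 2 * (ibs_mean E p b S * (1 - ibs_mean E p b S))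
  <= pS E p b S * (benefit E p b S / Gamma b).
Proof.
rewrite benefit_normalized pS_variance_coef; apply: variance_le_coef_mean mu_min_ge0.
- exact: rho_pos.
- exact: ibs_mean_bounds.
Qed.

Lemma below_f_l_deviation T (Rs : {ffun 'I_T -> {set V}}) delta :
  0 < INR T -> 0 < delta < 1 -> ~~ Rleb (f_l E p b S Rs delta) (benefit E p b S) ->
  bernstein_radius (rho E p b) (ln (1 / delta)) (INR T) (pS E p b S * (benefit E p b S / Gamma b))
  < rsum predT (fun j => deviation E p b S (Rs j)).
Proof.
move=> hT hd /Rleb_false hlt; rewrite rsum_deviation //.
apply: below_lower_bound_deviation => //.
- exact: rho_pos.
- exact: ln_inv_pos.
- exact: pS_ge0.
- exact: benefit_ge0.
Qed.

Lemma f_l_failure_prob_le T delta : 0 < INR T -> 0 < delta < 1 ->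
  sample_Pr E p b (fun Rs : {ffun 'I_T -> {set V}} =>
    ~~ Rleb (f_l E p b S Rs delta) (benefit E p b S)) <= delta.
Proof.
move=> hT hd.
have hv0 : 0 <= pS E p b S * (benefit E p b S / Gamma b).
  by apply: Rmult_le_pos; [exact: pS_ge0 | apply: Rdiv_le_0_compat; [exact: benefit_ge0 | lra]].
apply: Rle_trans (sample_bernstein hp hb hPhi hGamma hT (ln_inv_pos hd) hv0 variance_le_pS
                    (fun Rs => @below_f_l_deviation T Rs delta hT hd)) _.
rewrite exp_Ropp exp_ln; last by apply: Rdiv_lt_0_compat; lra.
by right; field; lra.
Qed.

End LowerBound.

Theorem lemma6 (V : finType) (E : {set V * V}) (p : V -> V -> R) (b : V -> R)
  (hp : forall e, e \in E -> 0 < p e.1 e.2 < 1)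
  (hb : forall u, 0 <= b u)
  (hGamma : 0 < Gamma b)
  (hPhi : 0 < Phi E p b)
  (delta : R) (hdelta : 0 < delta < 1)
  (S : {set V}) (T : nat) (hT : (0 < T)%nat) :
  sample_Pr E p b
    (fun Rs : {ffun 'I_T -> {set V}} =>
       Rleb (f_l E p b S Rs delta) (benefit E p b S))
  >= 1 - delta.
Proof.
have hT' : 0 < INR T by apply: lt_0_INR; apply/ltP.
have := f_l_failure_prob_le hp hb hGamma hPhi S hT' hdelta.
have := sample_Pr_complement hp hPhi (fun Rs : {ffun 'I_T -> {set V}} =>
          Rleb (f_l E p b S Rs delta) (benefit E p b S)).
lra.
Qed.
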